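(* Let $G$ be a finite group of order $n$ and $S\subseteq G$ with $gSg^{-1}=S$ for all $g$, $S$ generating $G$, $S=S^{-1}$, $1\notin S$; put $r=\#S$ and assume $\mathrm{Cay}(G,S)$ is not a cycle graph. Let $\ell$ be a prime and $\beta:S\to\mathbb{Z}_\ell$ satisfy: $\beta(gag^{-1})=\beta(a)$; the image of $\beta$ generates $\mathbb{Z}_\ell$; $\beta(s^{-1})=-\beta(s)$; the image of $\beta$ lies in $\mathbb{Z}$; and there exist $m>0$, $(h_1,\dots,h_m)\in S^m$ with $h_1\cdots h_m\in S$ and $\beta(h_1\cdots h_m)\not\equiv\sum_i\beta(h_i)\pmod\ell$. Let $\chi_1,\chi_2\in\mathrm{Irr}(G)$ be congruent characters, i.e. $\chi_1(g)\equiv\chi_2(g)\pmod{\varpi}$ for all $g\in G$, and suppose that $d:=\chi_1(1)=\chi_2(1)$ is prime to $\ell$. Then $\mu_{\chi_1}=0$ if and only if $\mu_{\chi_2}=0$, and if these conditions hold then $\lambda_{\chi_1}=\lambda_{\chi_2}$.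
   Context: Fix $\bar{\mathbb{Q}}\hookrightarrow\bar{\mathbb{Q}}_\ell$ and a finite extension $\mathcal{K}/\mathbb{Q}_\ell$ containing all $n$-th roots of unity, with valuation ring $\mathcal{O}$ and uniformizer $\varpi$. $\mathrm{Irr}(G)$ is the set of irreducible characters $\chi:G\to\bar{\mathbb{Q}}_\ell$ (values in $\mathcal{O}$). For $\chi\in\mathrm{Irr}(G)$, $Q_\chi(T):=r\chi(1)-\sum_{t\in S}(1+T)^{\beta(t)}\chi(t)\in\mathcal{O}[[T]]$ (with $(1+T)^b$, $b\in\mathbb{Z}$, viewed in $\mathbb{Z}_\ell[[T]]$); writing $Q_\chi(T)=\varpi^{\mu}f(T)u(T)$ with $f\in\mathcal{O}[T]$ a distinguished polynomial and $u\in\mathcal{O}[[T]]^\times$, set $\mu_\chi:=\mu$ and $\lambda_\chi:=\deg f$. *)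

From HB Require Import structures.
From mathcomp Require Import all_boot all_order all_algebra all_fingroup all_solvable all_field all_character.
Set Implicit Arguments. Unset Strict Implicit. Unset Printing Implicit Defensive.
Import GRing.Theory Num.Theory.
Local Open Scope ring_scope.

Definition cayley_adj (gT : finGroupType) (S : {set gT}) : rel gT :=
  fun x y => (x^-1 * y)%g \in S.

Definition is_cycle_graph (T : finType) (V : {set T}) (e : rel T) : Prop :=
  [/\ (3 <= #|V|)%N,
      (forall x, x \in V -> #|[set y in V | e x y]| = 2%N)
    & (forall x y, x \in V -> y \in V ->
         connect [rel u v | [&& u \in V, v \in V & e u v]] x y)].

(* The fixed embedding Qbar -> Qbar_ell is encoded by the valuation ring
   V = {x in Qbar | x lands in the integers of Qbar_ell}: a valuation ring of
   algC whose trace on Q is Z_(ell). *)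
Definition ell_valuation_ring (ell : nat) (V : {pred algC}) : Prop :=
  [/\ 1 \in V,
      (forall x y, x \in V -> y \in V -> x - y \in V),
      (forall x y, x \in V -> y \in V -> x * y \in V),
      (forall x, x != 0 -> x \in V \/ x^-1 \in V)
    & (forall q : rat, ratr q \in V <-> ~~ (ell%:Z %| denq q)%Z)].

(* x lies in the maximal ideal of V (i.e. x = 0 mod varpi). *)
Definition vmax (V : {pred algC}) (x : algC) : Prop :=
  x \in V /\ (x = 0 \/ x^-1 \notin V).

(* k-th coefficient of (1+T)^b in Z_ell[[T]], b integer: generalized binomial. *)
Definition gbinom (b : int) (k : nat) : algC :=
  (\prod_(i < k) (b%:~R - i%:R)) / (k`!)%:R.

(* Coefficients of Q_chi(T) = r chi(1) - sum_{t in S} (1+T)^{beta t} chi(t). *)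
Definition Qcoef (gT : finGroupType) (G : {group gT}) (S : {set gT})
  (beta : gT -> int) (chi : 'CF(G)) (k : nat) : algC :=
  (k == 0%N)%:R * (#|S|%:R * chi 1%g) - \sum_(t in S) gbinom (beta t) k * chi t.

(* mu = 0 for the power series with coefficients a: not all coefficients lie
   in varpi O, i.e. some coefficient is a unit. *)
Definition mu_zero (V : {pred algC}) (a : nat -> algC) : Prop :=
  exists k, a k \in V /\ ~ vmax V (a k).

(* lambda = k: a_k is the first coefficient of minimal valuation. *)
Definition is_lambda (V : {pred algC}) (a : nat -> algC) (k : nat) : Prop :=
  [/\ a k != 0, (forall j, a j / a k \in V)
    & (forall j, (j < k)%N -> vmax V (a j / a k))].

(* The coefficients of Q_chi are algebraic integers (those of (1+T)^b are
   integers), so they lie in the valuation ring O.  If chi1 and chi2 are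
   congruent of the same degree, the terms r chi(1) cancel and Q_chi1, Q_chi2
   are coefficientwise congruent mod varpi.  For a series over O, mu = 0 says
   that some coefficient is a unit, and then lambda is the index of the first
   unit coefficient; being a unit is invariant under congruence mod the maximal
   ideal, so both invariants coincide. *)

From HB Require Import structures.
From mathcomp Require Import all_boot all_order all_algebra all_fingroup all_solvable all_field all_character.
From mathcomp Require Import ring.
Import GRing.Theory Num.Theory.
Local Open Scope ring_scope.

Lemma gbinom0 b : gbinom b 0 = 1.
Proof. by rewrite /gbinom big_ord0 fact0 divr1. Qed.

Lemma gbinomSS b k : gbinom (b + 1) k.+1 = gbinom b k.+1 + gbinom b k.
Proof.
rewrite /gbinom big_ord_recl big_ord_recr /= intrD subr0 factS natrM.
rewrite (eq_bigr (fun i : 'I_k => b%:~R - i%:R)) => [|i _]; last first.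
  by rewrite /bump add1n -addn1 natrD; ring.
have fact_neq0 : (k`!)%:R != 0 :> algC by rewrite pnatr_eq0 -lt0n fact_gt0.
have kS_neq0 : 1 + k%:R != 0 :> algC by rewrite addrC natr1 pnatr_eq0.
by field; rewrite fact_neq0 kS_neq0.
Qed.

Lemma gbinom_int b k : gbinom b k \in Num.int.
Proof.
elim/int_rect: b k => [|n IHn|n IHn] k.
- case: k => [|k]; first by rewrite gbinom0 rpred1.
  by rewrite /gbinom big_ord_recl /= subrr !mul0r rpred0.
- case: k => [|k]; first by rewrite gbinom0 rpred1.
  by rewrite -addn1 PoszD gbinomSS rpredD.
- have succ_n : - n.+1%:Z + 1 = - n%:Z by rewrite -addn1 PoszD opprD addrNK.
  rewrite -succ_n in IHn.
  elim: k => [|k IHk]; first by rewrite gbinom0 rpred1.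
  by rewrite -[gbinom _ k.+1](addrK (gbinom (- n.+1%:Z) k)) -gbinomSS rpredB.
Qed.

Definition vunit (V : {pred algC}) (x : algC) := [&& x \in V, x != 0 & x^-1 \in V].

Section ValuationRing.

Variable V : subringClosed algC.
Hypothesis V_or_inv : forall x : algC, x != 0 -> x \in V \/ x^-1 \in V.

Lemma vmaxE x : vmax V x <-> x \in V /\ ~~ vunit V x.
Proof.
rewrite /vmax /vunit; split=> -[Vx nu]; split=> //.
  by rewrite Vx; case: nu => [->|/negPf->]; rewrite ?eqxx ?andbF.
by move: nu; rewrite Vx /= negb_and negbK => /orP[/eqP|]; [left | right].
Qed.

Lemma mu_zeroE a : mu_zero V a <-> exists k, vunit V (a k).
Proof.
split=> -[k ak]; exists k.
  by case: ak => Vak nmax; apply: contra_notT nmax => nu; apply/vmaxE.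
by case/and3P: (ak) => Vak _ _; split=> // /vmaxE[_]; rewrite ak.
Qed.

Lemma vmaxM v x : v \in V -> vmax V x -> vmax V (v * x).
Proof.
move=> Vv /vmaxE[Vx nux]; apply/vmaxE; split; first exact: rpredM.
apply: contra nux => /and3P[_ vx_neq0 Vvx_inv].
have [v_neq0 x_neq0] : v != 0 /\ x != 0 by apply/andP; rewrite -negb_or -mulf_eq0.
rewrite /vunit Vx x_neq0 /=.
have -> : x^-1 = v * (v * x)^-1 by rewrite invfM mulrA mulfV ?mul1r.
exact: rpredM.
Qed.

Lemma vmaxN x : vmax V x -> vmax V (- x).
Proof. by rewrite -mulN1r; apply: vmaxM; rewrite rpredN1. Qed.

(* One of x / y and y / x lies in V, so x + y is a V-multiple of x or of y. *)
Lemma vmaxD x y : vmax V x -> vmax V y -> vmax V (x + y).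
Proof.
move=> mx my.
have [->|x_neq0] := eqVneq x 0; first by rewrite add0r.
have [->|y_neq0] := eqVneq y 0; first by rewrite addr0.
have [Vxy|Vyx] := V_or_inv (x / y) (mulf_neq0 x_neq0 (invr_neq0 y_neq0)).
  have -> : x + y = (x / y + 1) * y by rewrite mulrDl divfK ?mul1r.
  by apply: vmaxM my; rewrite rpredD ?rpred1.
have -> : x + y = (1 + y / x) * x by rewrite mulrDl divfK ?mul1r // addrC.
by apply: vmaxM mx; rewrite rpredD ?rpred1 // -invf_div.
Qed.

Lemma vmax_sum (I : Type) (r : seq I) (P : pred I) (F : I -> algC) :
  (forall i, P i -> vmax V (F i)) -> vmax V (\sum_(i <- r | P i) F i).
Proof.
move=> mF; apply: (big_ind (vmax V)) => //; last exact: vmaxD.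
by apply/vmaxE; rewrite rpred0 /vunit eqxx andbF.
Qed.

Lemma vunit_congr a b : vmax V (a - b) -> vunit V a = vunit V b.
Proof.
have vunit_transfer x y : vmax V (x - y) -> vunit V x -> vunit V y.
  move=> mxy ux; have Vy : y \in V.
    by rewrite -[y](subKr x) rpredB //; [case/and3P: ux | case/vmaxE: mxy].
  apply: contraTT ux => nuy; have /vmaxE[] // : vmax V x.
  by rewrite -[x](subrK y); apply: vmaxD => //; apply/vmaxE.
move=> mab; apply/idP/idP; apply: vunit_transfer => //.
by rewrite -opprB; apply: vmaxN.
Qed.

Lemma is_lambda_first_vunit (a : nat -> algC) k :
  (forall j, a j \in V) -> vunit V (a k) -> (forall j, (j < k)%N -> ~~ vunit V (a j)) ->
  is_lambda V a k.
Proof.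
move=> Va /and3P[_ ak_neq0 Vak_inv] nua; split=> // [j|j /nua nuaj].
  exact: rpredM.
by rewrite mulrC; apply: vmaxM => //; apply/vmaxE.
Qed.

Lemma congruent_series_mu_lambda (a b : nat -> algC) :
  (forall k, a k \in V) -> (forall k, vmax V (a k - b k)) ->
  (mu_zero V a <-> mu_zero V b) /\
  (mu_zero V a -> exists k, is_lambda V a k /\ is_lambda V b k).
Proof.
move=> Va mab; have uab k : vunit V (a k) = vunit V (b k) by apply: vunit_congr.
have Vb k : b k \in V by rewrite -[b k](subKr (a k)) rpredB //; case/vmaxE: (mab k).
rewrite !mu_zeroE; split.
  by split=> -[k uk]; exists k; rewrite ?uab // -uab.
move=> ex_ua; case: (ex_minnP ex_ua) => k uak kmin.
have nua j : (j < k)%N -> ~~ vunit V (a j).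
  by move=> jk; apply/negP => /kmin; rewrite leqNgt jk.
exists k; split; apply: is_lambda_first_vunit => // [|j /nua]; by rewrite -uab.
Qed.

Lemma int_vring : {subset Num.int <= V}.
Proof. by move=> x /intrP[m ->]; apply: rpred_int. Qed.

(* If x were not in V, then x^-1 would lie in the maximal ideal, and dividing
   a monic integral equation of x by its leading monomial would put 1 there. *)
Lemma Aint_vring : {subset Aint <= V}.
Proof.
move=> x Ax; apply/negPn/negP => NVx.
have x_neq0 : x != 0 by apply: contraNneq NVx => ->; apply: rpred0.
have Vy : x^-1 \in V by case: (V_or_inv x x_neq0) => // Vx; rewrite Vx in NVx.
have my : vmax V x^-1 by apply/vmaxE; rewrite /vunit invrK (negPf NVx) !andbF.
set p := minCpoly x; have Vp : p \is a polyOver V := polyOverS int_vring Ax.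
have [n size_p] : exists n, size p = n.+2.
  by exists (size p).-2; rewrite -subn2 -addn2 subnK // size_minCpoly.
have lead_p : p`_n.+1 = 1 by have /monicP := minCpoly_monic x; rewrite lead_coefE size_p.
have pow_x i : (i <= n)%N -> x ^+ i * x^-1 ^+ n.+1 = x^-1 ^+ (n - i) * x^-1.
  move=> le_in; have -> : n.+1 = ((n - i).+1 + i)%N by rewrite addSn subnK.
  by rewrite exprD mulrCA -exprMn mulfV // expr1n mulr1 exprSr.
have: p.[x] * x^-1 ^+ n.+1 = 0 by rewrite (rootP (root_minCpoly x)) mul0r.
rewrite horner_coef size_p big_ord_recr /= lead_p mul1r mulrDl -exprMn mulfV //.
rewrite expr1n mulr_suml => /eqP; rewrite addrC addr_eq0 => /eqP one_eq.
have: vmax V (- \sum_(i < n.+1) p`_i * x ^+ i * x^-1 ^+ n.+1).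
  apply: vmaxN; apply: vmax_sum => i _; rewrite -mulrA pow_x -1?ltnS // mulrA.
  by apply: vmaxM my; rewrite rpredM ?rpredX //; apply/polyOverP.
by rewrite -one_eq => /vmaxE[_]; rewrite /vunit invr1 rpred1 oner_eq0.
Qed.

Lemma Qcoef_congr (gT : finGroupType) (G : {group gT}) (S : {set gT}) (beta : gT -> int)
    (chi1 chi2 : 'CF(G)) k :
  chi1 1%g = chi2 1%g -> (forall g, vmax V (chi1 g - chi2 g)) ->
  vmax V (Qcoef S beta chi1 k - Qcoef S beta chi2 k).
Proof.
move=> chi12_1 m12; rewrite /Qcoef chi12_1 opprB addrC subrKA -sumrB.
apply: vmax_sum => t _; rewrite -mulrBr -opprB; apply: vmaxM; last exact/vmaxN/m12.
exact/int_vring/gbinom_int.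
Qed.

End ValuationRing.

Lemma Qcoef_Aint (gT : finGroupType) (G : {group gT}) (S : {set gT}) (beta : gT -> int)
    (chi : 'CF(G)) k :
  (forall g, chi g \in Aint) -> Qcoef S beta chi k \in Aint.
Proof.
move=> Achi; apply: rpredB.
  by apply: rpredM; [exact: rpred_nat | apply: rpredM; [exact: rpred_nat | exact: Achi]].
by apply: rpred_sum => t _; apply: rpredM; [exact/Aint_Cint/gbinom_int | exact: Achi].
Qed.

Theorem proposition3p8 (gT : finGroupType) (G : {group gT}) (S : {set gT})
  (ell : nat) (beta : gT -> int) (V : {pred algC}) (i1 i2 : Iirr G) (d : nat) :
  S \subset G ->
  (forall g, g \in G -> (S :^ g)%g = S) ->
  <<S>>%g = G ->
  (forall s, s \in S -> (s^-1)%g \in S) ->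
  1%g \notin S ->
  ~ is_cycle_graph G (cayley_adj S) ->
  prime ell ->
  (forall a g, a \in S -> g \in G -> beta (a ^ g)%g = beta a) ->
  (exists2 s, s \in S & ~~ (ell%:Z %| beta s)%Z) ->
  (forall s, s \in S -> beta (s^-1)%g = - beta s) ->
  (exists hs : seq gT,
     [/\ (0 < size hs)%N, all (mem S) hs, (\prod_(h <- hs) h)%g \in S &
         (beta (\prod_(h <- hs) h)%g != \sum_(h <- hs) beta h %[mod ell%:Z])%Z]) ->
  ell_valuation_ring ell V ->
  (forall g, vmax V ('chi_i1 g - 'chi_i2 g)) ->
  'chi_i1 1%g = d%:R -> 'chi_i2 1%g = d%:R -> coprime d ell ->
  (mu_zero V (Qcoef S beta 'chi_i1) <-> mu_zero V (Qcoef S beta 'chi_i2)) /\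
  (mu_zero V (Qcoef S beta 'chi_i1) ->
     exists k, is_lambda V (Qcoef S beta 'chi_i1) k /\
               is_lambda V (Qcoef S beta 'chi_i2) k).
Proof.
move=> _ _ _ _ _ _ _ _ _ _ _ [V1 VB VM V_or_inv _] chi12 chi1_1 chi2_1 _.
pose VR := HB.pack_for (subringClosed algC) V
  (GRing.isSubringClosed.Build algC V (And3 V1 VB VM)).
apply: (@congruent_series_mu_lambda VR V_or_inv) => k.
  exact/(@Aint_vring VR V_or_inv)/Qcoef_Aint/Aint_irr.
by apply: Qcoef_congr => //; rewrite chi1_1 chi2_1.
Qed.
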